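(* Let $-1<q<1$ and let $X(t)$ be the centered $q$-Poisson process. Then for every $m\ge0$ and $t>0$ the full stochastic measure $\psi_m(t)=\lim_{\delta(\mathcal I)\to0}\psi_m(t;\mathcal I)$ exists as a limit in the $L^2$-norm with respect to $\mathbb E$, and $\psi_m(t)=C_{q,m}(X(t),t)$.
   Context: $q$-Fock space over $H=L^2(\mathbb R_+,dx)$: the algebraic Fock space $\bigoplus_{k\ge0}H^{\otimes k}$ (vacuum $\Omega$) with inner product $\langle f_1\otimes\cdots\otimes f_k,g_1\otimes\cdots\otimes g_n\rangle_q=\delta_{kn}\sum_{\sigma\in\mathrm{Sym}(n)}q^{i(\sigma)}\prod_j\langle f_j,g_{\sigma(j)}\rangle$ ($i(\sigma)$ = number of inversions), completed to $\mathcal F_q(H)$. For $f\in L^2\cap L^\infty(\mathbb R_+)$: $a^*(f)\Omega=f$, $a^*(f)(g_1\otimes\cdots\otimes g_n)=f\otimes g_1\otimes\cdots\otimes g_n$; $a(f)\Omega=0$, $a(f)(g_1\otimes\cdots\otimes g_n)=\sum_{k=1}^nq^{k-1}\langle f,g_k\rangle g_1\otimes\cdots\widehat{g_k}\cdots\otimes g_n$; $p(f)\Omega=0$, $p(f)(g_1\otimes\cdots\otimes g_n)=\sum_{k=1}^nq^{k-1}(fg_k)\otimes g_1\otimes\cdots\widehat{g_k}\cdots\otimes g_n$ (hat = omitted). The centered $q$-Poisson process is $X(t)=a^*(\mathbf 1_{[0,t)})+a(\mathbf 1_{[0,t)})+p(\mathbf 1_{[0,t)})$. $\mathbb E[A]=\langle\Omega,A\Omega\rangle$,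 $\|A\|_2=\mathbb E[A^*A]^{1/2}$. For a subdivision $\mathcal I=\{[a_i,a_{i+1})\}_{i=1}^N$ of $[0,t)$, $\delta(\mathcal I)=\max_i(a_{i+1}-a_i)$, $X_i=X(a_{i+1})-X(a_i)$, and $\psi_m(t;\mathcal I)=\sum X_{u(1)}\cdots X_{u(m)}$ over all $m$-tuples of pairwise distinct indices $u(j)\in\{1,\dots,N\}$. Let $[0]_q=0$, $[n]_q=1+q+\dots+q^{n-1}$. The polynomials $C_{q,m}(x,t)$ (scaled centered continuous big $q$-Hermite polynomials) are defined by $C_{q,0}=1$, $C_{q,-1}=0$ and $xC_{q,m}(x,t)=C_{q,m+1}(x,t)+[m]_qC_{q,m}(x,t)+t[m]_qC_{q,m-1}(x,t)$. *)

From HB Require Import structures.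
From mathcomp Require Import all_boot all_order all_algebra all_fingroup.
From mathcomp Require Import all_classical all_reals all_analysis.
Set Implicit Arguments. Unset Strict Implicit. Unset Printing Implicit Defensive.
Import Order.TTheory GRing.Theory Num.Theory.
Local Open Scope ring_scope.

Section QFock.
Variable R : realType.

(* real-valued functions on R (we only use their restriction to R_+) *)
Definition fn := R -> R.
(* simple tensor f_1 (x) ... (x) f_k ; the empty list is the vacuum Omega *)
Definition tens := seq fn.
(* element of the algebraic Fock space: formal finite linear combination *)
Definition vec := seq (R * tens).

Definition fn0 : fn := fun _ => 0.

Definition ip1 (f g : fn) : R :=
  Rintegral lebesgue_measure `[0%R, +oo[%classic (fun x => f x * g x).

Definition inversions n (s : 'S_n) : nat :=
  #|[set p : 'I_n * 'I_n | (p.1 < p.2)%N && (s p.2 < s p.1)%N]|.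

Definition tensip (q : R) (fs gs : tens) : R :=
  if size fs == size gs then
    \sum_(s : 'S_(size fs)) q ^+ inversions s *
       \prod_(j < size fs) ip1 (nth fn0 fs j) (nth fn0 gs (s j))
  else 0.

Definition vip (q : R) (v w : vec) : R :=
  \sum_(a <- v) \sum_(b <- w) a.1 * b.1 * tensip q a.2 b.2.

Definition vnorm (q : R) (v : vec) : R := Num.sqrt (vip q v v).

Definition Omega : vec := [:: (1, [::])].
Definition vscale (c : R) (v : vec) : vec := [seq (c * a.1, a.2) | a <- v].
Definition vadd (v w : vec) : vec := v ++ w.
Definition vsub (v w : vec) : vec := v ++ vscale (-1) w.
Definition vsum (vs : seq vec) : vec := flatten vs.

Definition vmap (op : tens -> vec) (v : vec) : vec :=
  flatten [seq vscale a.1 (op a.2) | a <- v].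

Definition rem_at (k : nat) (fs : tens) : tens := take k fs ++ drop k.+1 fs.

Definition acr (f : fn) (fs : tens) : vec := [:: (1, f :: fs)].
(* a(f): 0-based index k carries q^k (= q^{k-1} in 1-based indexing) *)
Definition ann (q : R) (f : fn) (fs : tens) : vec :=
  [seq (q ^+ k * ip1 f (nth fn0 fs k), rem_at k fs) | k <- iota 0 (size fs)].
Definition pres (q : R) (f : fn) (fs : tens) : vec :=
  [seq (q ^+ k, (fun x => f x * nth fn0 fs k x) :: rem_at k fs)
     | k <- iota 0 (size fs)].

Definition ind0 (t : R) : fn := fun x => if (0 <= x) && (x < t) then 1 else 0.

Definition Xop (q t : R) (v : vec) : vec :=
  vadd (vmap (acr (ind0 t)) v)
       (vadd (vmap (ann q (ind0 t)) v) (vmap (pres q (ind0 t)) v)).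

Definition Xinc (q a b : R) (v : vec) : vec := vsub (Xop q b v) (Xop q a v).

Definition is_subdiv (t : R) (s : seq R) : Prop :=
  [/\ (1 < size s)%N, head 0 s = 0, last 0 s = t & sorted (fun x y => x < y) s].

Definition nintervals (s : seq R) : nat := (size s).-1.

Definition mesh (s : seq R) : R :=
  \big[Num.max/0]_(i < nintervals s) (nth 0 s i.+1 - nth 0 s i).

(* psi_m(t; I) Omega = sum over injective u of X_{u(1)} ... X_{u(m)} Omega *)
Definition psi_vec (q : R) (m : nat) (s : seq R) : vec :=
  vsum (map (fun u : {ffun 'I_m -> 'I_(nintervals s)} =>
               foldr (fun (j : 'I_m) v =>
                        Xinc q (nth 0 s (nat_of_ord (u j)))
                               (nth 0 s (nat_of_ord (u j)).+1) v)
                     Omega (enum 'I_m))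
            (enum [pred u : {ffun 'I_m -> 'I_(nintervals s)} | injectiveb u])).

Definition qint (q : R) (n : nat) : R := \sum_(i < n) q ^+ i.

(* (C_{q,m}(X(t),t) Omega, C_{q,m-1}(X(t),t) Omega), from the recursion
   C_{m+1} = x C_m - [m]_q C_m - t [m]_q C_{m-1} *)
Fixpoint Cpair (q t : R) (m : nat) : vec * vec :=
  match m with
  | 0 => (Omega, [::])
  | m'.+1 => let: (c, cp) := Cpair q t m' in
      (vadd (Xop q t c)
         (vadd (vscale (- qint q m') c) (vscale (- (t * qint q m')) cp)), c)
  end.

Definition C_vec (q t : R) (m : nat) : vec := (Cpair q t m).1.

End QFock.

(* Fix a subdivision s of [0, t).  Every vector involved (the vacuum, products of the
   increments X_i applied to it, and C_{q,m}(X(t), t) applied to it) is a combination of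
   tensors of step functions constant on the cells of s, hence is determined by its
   coefficients on words of cell indices, and X(b) acts on these coefficients by explicit
   creation, annihilation and preservation formulas.  In these coordinates psi_m(t; s) is
   the indicator of the injective words of length m, while C_{q,m}(X(t), t) is the constant
   1 on words of length m.  Their difference lives on non-injective words, so its squared
   q-norm is at most m! times the product measure of {w | w_i = w_j for some i <> j}, which
   is at most m^2 t (1 + t)^m delta(s). *)

From HB Require Import structures.
From mathcomp Require Import all_boot all_order all_algebra all_fingroup.
From mathcomp Require Import all_classical all_reals all_analysis.
From mathcomp Require Import ring lra zify.
Set Implicit Arguments. Unset Strict Implicit. Unset Printing Implicit Defensive.
Import Order.TTheory GRing.Theory Num.Theory.
Local Open Scope ring_scope.

Lemma big_iota0_ord (T : Type) (idx : T) (op : T -> T -> T) n (F : nat -> T) :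
  \big[op/idx]_(k <- iota 0 n) F k = \big[op/idx]_(k < n) F k.
Proof. by rewrite -(big_mkord xpredT) /index_iota subn0. Qed.

Section StepIntegral.
Local Open Scope classical_set_scope.
Variable R : realType.
Local Notation mu := (@lebesgue_measure R).
Local Notation D := (`[0%R, +oo[ : set R).

Let measurableD : measurable D. Proof. exact: measurable_itv. Qed.

Lemma integrable_indic_itv_co (a b : R) : mu.-integrable D (EFin \o \1_(`[a, b[)).
Proof. by apply: (@integrableS _ _ _ _ setT) => //; exact: integrable_indic_itv. Qed.

Let fine_lebesgue_measure_itv_co (a b : R) : a < b ->
  fine (@lebesgue_measure R `[a, b[) = b - a.
Proof. by move=> lt_ab; rewrite lebesgue_measure_itv /= lte_fin lt_ab. Qed.

Lemma Rintegral_indic_itv_co (a b : R) : 0 <= a <= b ->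
  Rintegral mu D (\1_(`[a, b[)) = b - a.
Proof.
move=> /andP[a0 ab]; rewrite /Rintegral integral_indic ?measurable_itv //.
rewrite setIidl; last first.
  by move=> y /=; rewrite !in_itv /= andbT => /andP[ay _]; exact: le_trans ay.
have [lt_ab|le_ba] := ltP a b.
  exact: fine_lebesgue_measure_itv_co.
have -> : b = a by apply/eqP; rewrite eq_le ab le_ba.
by rewrite set_itvco0 measure0 subrr.
Qed.

Lemma Rintegral_step n (c a b : nat -> R) : (forall l, (l < n)%N -> 0 <= a l <= b l) ->
  mu.-integrable D (EFin \o (fun x => \sum_(l < n) c l * \1_(`[a l, b l[) x)) /\
  Rintegral mu D (fun x => \sum_(l < n) c l * \1_(`[a l, b l[) x) =
    \sum_(l < n) c l * (b l - a l).
Proof.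
elim: n => [|n IHn] hab.
  have -> : (fun x : R => \sum_(l < 0) c l * \1_(`[a l, b l[) x) = cst 0.
    by apply/funext => x; rewrite big_ord0.
  rewrite big_ord0 Rintegral_cst // mul0r; split => //.
  by apply: (eq_integrable _ (cst 0%E)) => //; exact: integrable0.
have [int_n Rint_n] := IHn (fun l hl => hab l (ltnW hl)).
have int_c : mu.-integrable D (EFin \o (fun x => c n * \1_(`[a n, b n[) x)).
  have -> : EFin \o (fun x => c n * \1_(`[a n, b n[) x) =
      (fun x => ((c n)%:E * (EFin \o \1_(`[a n, b n[)) x)%E).
    by apply/funext => x /=; rewrite EFinM.
  exact/integrableZl/integrable_indic_itv_co.
have -> : (fun x : R => \sum_(l < n.+1) c l * \1_(`[a l, b l[) x) =
    (fun x => \sum_(l < n) c l * \1_(`[a l, b l[) x + c n * \1_(`[a n, b n[) x).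
  by apply/funext => x; rewrite big_ord_recr.
rewrite big_ord_recr /=; split.
  have -> : EFin \o (fun x => \sum_(l < n) c l * \1_(`[a l, b l[) x +
                              c n * \1_(`[a n, b n[) x) =
      (EFin \o (fun x => \sum_(l < n) c l * \1_(`[a l, b l[) x)) \+
      (EFin \o (fun x => c n * \1_(`[a n, b n[) x)).
    by apply/funext => x /=; rewrite EFinD.
  exact: integrableD.
rewrite (@RintegralD _ _ _ mu _ _ _ measurableD int_n int_c) Rint_n.
rewrite (@RintegralZl _ _ _ mu _ _ _ measurableD (integrable_indic_itv_co _ _)).
by rewrite Rintegral_indic_itv_co ?hab.
Qed.

End StepIntegral.

Section ProductWeights.
Variables (R : realFieldType) (n : nat) (d : 'I_n -> R) (delta : R).
Hypotheses (d_ge0 : forall l, 0 <= d l) (d_le : forall l, d l <= delta).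
Hypothesis delta_ge0 : 0 <= delta.
Local Notation T := (\sum_(l < n) d l).

Let T_ge0 : 0 <= T. Proof. exact: sumr_ge0. Qed.

Let d_le_T l : d l <= T.
Proof. by rewrite (bigD1 l) //= lerDl; exact: sumr_ge0. Qed.

Lemma prod_le_expn m (P : pred 'I_m) (c : 'I_m -> R) (b : R) :
  1 <= b -> (forall j, 0 <= c j <= b) -> \prod_(j < m | P j) c j <= b ^+ m.
Proof.
move=> b1 hc; apply: (@le_trans _ _ (\prod_(j < m | P j) b)).
  by apply: ler_prod => j _; exact: hc.
by rewrite prodr_const; apply: ler_weXn2l => //; rewrite (leq_trans (max_card _)) ?card_ord.
Qed.

(* Splitting on the common value l of w j1 = w j2 factors the sum into a product of sums. *)
Lemma sum_ffun_collision_le m (j1 j2 : 'I_m) : j1 != j2 ->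
  \sum_(w : {ffun 'I_m -> 'I_n}) (w j1 == w j2)%:R * \prod_(j < m) d (w j)
    <= T * (delta * (1 + T) ^+ m).
Proof.
move=> ne12; pose on_pair j := (j == j1) || (j == j2).
pose phi (l : 'I_n) (j : 'I_m) (x : 'I_n) : R :=
  d x * (if on_pair j then (x == l)%:R else 1).
have split_l (w : {ffun 'I_m -> 'I_n}) : (w j1 == w j2)%:R * \prod_(j < m) d (w j) =
    \sum_(l < n) \prod_(j < m) phi l j (w j).
  have pair_prod (l : 'I_n) : \prod_(j < m) (if on_pair j then (w j == l)%:R else 1 : R)
      = (w j1 == l)%:R * (w j2 == l)%:R.
    rewrite (bigD1 j1) /on_pair ?eqxx //= (bigD1 j2) /= ?eqxx ?orbT; last by rewrite eq_sym.
    by rewrite big1 ?mulr1 // => j /andP[/negbTE-> /negbTE->].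
  under [RHS]eq_bigr do rewrite /phi big_split /= pair_prod.
  rewrite -mulr_sumr mulrC; congr (_ * _).
  rewrite (bigD1 (w j1)) //= eqxx mul1r big1 ?addr0; first by rewrite eq_sym.
  by move=> l; rewrite eq_sym => /negbTE->; rewrite mul0r.
under eq_bigr do rewrite split_l.
rewrite exchange_big /=; under eq_bigr do rewrite -bigA_distr_bigA /=.
rewrite mulr_suml; apply: ler_sum => l _.
have on_pairE j : on_pair j -> \sum_(x < n) phi l j x = d l.
  move=> hj; rewrite /phi hj (bigD1 l) //= eqxx mulr1 big1 ?addr0 // => x /negbTE->.
  by rewrite mulr0.
have off_pairE j : ~~ on_pair j -> \sum_(x < n) phi l j x = T.
  by move=> /negbTE hj; apply: eq_bigr => x _; rewrite /phi hj mulr1.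
have factor_bound j : 0 <= \sum_(x < n) phi l j x <= 1 + T.
  have [/on_pairE->|/off_pairE->] := boolP (on_pair j).
    by rewrite d_ge0 /= (le_trans (d_le_T l)) // lerDr ler01.
  by rewrite T_ge0 lerDr ler01.
rewrite (bigD1 j1) /= ?on_pairE /on_pair ?eqxx //; apply: ler_wpM2l => //.
rewrite (bigD1 j2) /= ?on_pairE /on_pair ?eqxx ?orbT 1?eq_sym //.
apply: ler_pM => //; first by apply: prodr_ge0 => j _; case/andP: (factor_bound j).
by apply: prod_le_expn => //; rewrite lerDl T_ge0.
Qed.

Lemma sum_ffun_noninjective_le m :
  \sum_(w : {ffun 'I_m -> 'I_n}) (~~ injectiveb w)%:R * \prod_(j < m) d (w j)
    <= m%:R * (m%:R * (T * (delta * (1 + T) ^+ m))).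
Proof.
set B := T * _; have B_ge0 : 0 <= B.
  by rewrite !mulr_ge0 // exprn_ge0 // addr_ge0.
pose coll (w : {ffun 'I_m -> 'I_n}) j1 j2 := (w j1 == w j2)%:R * \prod_(j < m) d (w j).
have coll_ge0 w j1 j2 : 0 <= coll w j1 j2.
  by rewrite mulr_ge0 ?ler0n //; apply: prodr_ge0.
apply: (@le_trans _ _ (\sum_w \sum_(j1 < m) \sum_(j2 < m | j2 != j1) coll w j1 j2)).
  apply: ler_sum => w _.
  have sum_coll_ge0 j1 : 0 <= \sum_(j2 < m | j2 != j1) coll w j1 j2.
    by apply: sumr_ge0 => j2 _; exact: coll_ge0.
  case: (boolP (injectiveb w)) => hw /=.
    by rewrite mul0r; apply: sumr_ge0 => j1 _.
  have [x [y ne_xy wxy]] := injectivePn _ hw.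
  rewrite mul1r [leRHS](bigD1 x) //= [in leRHS](bigD1 y) /=; last by rewrite eq_sym.
  rewrite {1}/coll wxy eqxx mul1r -addrA lerDl addr_ge0 //.
    by apply: sumr_ge0 => j2 _; exact: coll_ge0.
  by apply: sumr_ge0 => j1 _.
rewrite exchange_big /=; apply: (@le_trans _ _ (\sum_(j1 < m) \sum_(j2 < m) B)).
  apply: ler_sum => j1 _; rewrite exchange_big /= [leLHS]big_mkcond /=.
  apply: ler_sum => j2 _; case: ifP => ne; last by [].
  by apply: sum_ffun_collision_le; rewrite eq_sym ne.
by rewrite !sumr_const !card_ord !mulr_natl.
Qed.

End ProductWeights.

Lemma norm_sum_qinversions_le (R : numDomainType) (q : R) m : `|q| <= 1 ->
  `|\sum_(sg : 'S_m) q ^+ inversions sg| <= #|'S_m|%:R.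
Proof.
move=> hq; apply: (le_trans (ler_norm_sum _ _ _)).
rewrite -sumr_const; apply: ler_sum => sg _.
by rewrite normrX exprn_ile1.
Qed.

Section Words.
Variables k n : nat.

Definition word (w : {ffun 'I_k -> 'I_n}) : seq nat := [seq nat_of_ord (w j) | j <- enum 'I_k].

Lemma size_word w : size (word w) = k.
Proof. by rewrite size_map size_enum_ord. Qed.

Lemma nth_word w (j : 'I_k) : nth 0%N (word w) j = w j.
Proof. by rewrite (nth_map j) ?size_enum_ord // nth_ord_enum. Qed.

Lemma word_inj : injective word.
Proof.
move=> w1 w2 eq_w; apply/ffunP => j; apply: val_inj.
by rewrite /= -!nth_word eq_w.
Qed.

Lemma injectiveb_perm (w : {ffun 'I_k -> 'I_n}) (sg : 'S_k) :
  injectiveb [ffun j => w (sg^-1 j)%g] = injectiveb w.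
Proof.
apply/injectiveP/injectiveP => w_inj x y.
  by move=> eq_w; apply: (@perm_inj _ sg); apply: w_inj; rewrite !ffunE !permK.
by rewrite !ffunE => /w_inj /perm_inj.
Qed.

End Words.

(** * Step functions on a subdivision *)

Section Subdivision.
Variables (R : realType) (t : R) (s : seq R).
Hypothesis s_subdiv : is_subdiv t s.

Local Notation N := (nintervals s).
Local Notation pt i := (nth 0 s i).

Definition gap (l : nat) : R := pt l.+1 - pt l.
Definition cell (l : nat) (x : R) : R := ind0 (pt l.+1) x - ind0 (pt l) x.
Definition at_cell (f : fn R) (l : nat) : R := f (pt l).
Definition is_step (f : fn R) := forall x, f x = \sum_(l < N) at_cell f l * cell l x.

Lemma size_subdiv : size s = N.+1.
Proof. by case: s_subdiv; rewrite /nintervals; case: (size s). Qed.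

Lemma nintervals_gt0 : (0 < N)%N.
Proof. by case: s_subdiv; rewrite /nintervals; case: (size s) => // [[]]. Qed.

Lemma subdiv_first : pt 0 = 0.
Proof. by case: s_subdiv => _ h _ _; rewrite nth0. Qed.

Lemma subdiv_last : pt N = t.
Proof. by case: s_subdiv => _ _ h _; rewrite /nintervals nth_last. Qed.

Lemma subdiv_lt i j : (i < j)%N -> (j <= N)%N -> pt i < pt j.
Proof.
move=> ij jN; case: s_subdiv => _ _ _ s_sorted.
by apply: (sorted_ltn_nth lt_trans) => //; rewrite inE size_subdiv; lia.
Qed.

Lemma subdiv_le i j : (i <= j)%N -> (j <= N)%N -> pt i <= pt j.
Proof.
rewrite leq_eqVlt => /orP[/eqP-> _|ij jN]; first exact: lexx.
exact/ltW/subdiv_lt.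
Qed.

Lemma subdiv_ge0 i : (i <= N)%N -> 0 <= pt i.
Proof. by move=> iN; have := subdiv_le (leq0n i) iN; rewrite subdiv_first. Qed.

Lemma gap_ge0 l : (l < N)%N -> 0 <= gap l.
Proof. by move=> lN; rewrite subr_ge0 subdiv_le. Qed.

Lemma gap_le_mesh l : (l < N)%N -> gap l <= mesh s.
Proof. by move=> lN; rewrite /mesh (bigD1 (Ordinal lN)) //= le_max lexx. Qed.

Lemma mesh_ge0 : 0 <= mesh s.
Proof. exact: le_trans (gap_ge0 nintervals_gt0) (gap_le_mesh nintervals_gt0). Qed.

Lemma sum_gap : \sum_(l < N) gap l = t.
Proof.
rewrite -(big_mkord xpredT gap) (telescope_sumr (fun l => pt l)) //.
by rewrite subdiv_last subdiv_first subr0.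
Qed.

Lemma cellE l x : (l < N)%N -> cell l x = \1_(`[pt l, pt l.+1[) x.
Proof.
move=> lN; have := subdiv_ge0 (ltnW lN); have := subdiv_lt (ltnSn l) lN.
rewrite indicE /cell /ind0 mem_setE in_itv /=.
by case: (leP 0 x); case: (ltP x (pt l)); case: (ltP x (pt l.+1));
  rewrite /= ?subrr ?subr0 ?sub0r //; lra.
Qed.

Lemma cell_mul l l' x : (l < N)%N -> (l' < N)%N ->
  cell l x * cell l' x = (l == l')%:R * cell l x.
Proof.
move=> lN l'N; rewrite !cellE // !indicE !mem_setE !in_itv /=.
have [<-|ne] := eqVneq l l'; first by rewrite -!natrM !mulnb andbb.
rewrite mul0r.
wlog lt_ll' : l l' lN l'N ne / (l < l')%N.
  move=> wlog_lt; case: (ltngtP l l') => [|lt_l'l|eq_ll']; first exact: wlog_lt.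
    by rewrite mulrC wlog_lt // eq_sym.
  by rewrite eq_ll' eqxx in ne.
have := subdiv_le lt_ll' (ltnW l'N).
by case: (leP (pt l) x); case: (ltP x (pt l.+1)); case: (leP (pt l') x);
  case: (ltP x (pt l'.+1)); rewrite /= ?mulr0 ?mul0r //; lra.
Qed.

Lemma is_step_mul f g : is_step f -> is_step g -> is_step (fun x => f x * g x).
Proof.
move=> hf hg x; rewrite {1}hf {1}hg big_distrl /=.
apply: eq_bigr => l _; rewrite big_distrr /= (bigD1 l) //= big1 ?addr0.
  by rewrite mulrACA cell_mul // eqxx mul1r.
move=> l' ne; rewrite mulrACA cell_mul //.
have /negbTE-> : (l : nat) != l' by rewrite eq_sym.
by rewrite mul0r mulr0.
Qed.

Lemma is_step0 : is_step (@fn0 R).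
Proof. by move=> x; rewrite big1 // => l _; rewrite /at_cell /fn0 mul0r. Qed.

Lemma at_cell_ind0 i l : (i <= N)%N -> (l < N)%N -> at_cell (ind0 (pt i)) l = (l < i)%:R.
Proof.
move=> iN lN; rewrite /at_cell /ind0 subdiv_ge0 ?(ltnW lN) //=.
by case: (ltnP l i) => h; [rewrite subdiv_lt | rewrite ltNge subdiv_le ?(ltnW lN)].
Qed.

Lemma is_step_ind0 i : (i <= N)%N -> is_step (ind0 (pt i)).
Proof.
move=> iN x; symmetry; transitivity (\sum_(l < N | (l < i)%N) cell l x).
  rewrite [RHS]big_mkcond /=; apply: eq_bigr => l _.
  by rewrite at_cell_ind0 //; case: (l < i)%N; rewrite ?mul1r ?mul0r.
rewrite -(big_ord_widen N (fun l => cell l x)) // -(big_mkord xpredT (fun l => cell l x)).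
rewrite (telescope_sumr (fun l => ind0 (pt l) x)) // subdiv_first.
have -> : ind0 0 x = 0 by rewrite /ind0; case: (leP 0 x) => //= x_ge0; rewrite ltNge x_ge0.
by rewrite subr0.
Qed.

Lemma is_step_ind0_t : is_step (ind0 t).
Proof. by rewrite -subdiv_last; exact: is_step_ind0. Qed.

Lemma ip1_step f g : is_step f -> is_step g ->
  ip1 f g = \sum_(l < N) at_cell f l * at_cell g l * gap l.
Proof.
move=> hf hg; rewrite /ip1.
have -> : (fun x => f x * g x) =
    (fun x => \sum_(l < N) (at_cell f l * at_cell g l) * \1_(`[pt l, pt l.+1[%classic) x).
  by apply/funext => x; rewrite (is_step_mul hf hg x); apply: eq_bigr => l _; rewrite cellE.
have pt_range l : (l < N)%N -> 0 <= pt l <= pt l.+1.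
  by move=> lN; rewrite subdiv_ge0 ?(ltnW lN) ?subdiv_le.
by have [_ ->] := Rintegral_step (fun l => at_cell f l * at_cell g l) pt_range.
Qed.

Variable q : R.

(* A vector whose tensor factors are step functions is determined by its values at the
   left endpoints of the cells: [vec_coef v w] is the value of v at (pt w_1, ..., pt w_k).
   The operators [acrC], [annC], [presC] are a^*, a and p acting on such coefficient
   functions, for a step function with cell values [a]. *)
Definition tens_mono (fs : tens R) (w : seq nat) : R := \prod_(x <- zip fs w) at_cell x.1 x.2.
Definition tens_coef (fs : tens R) (w : seq nat) : R := (size fs == size w)%:R * tens_mono fs w.
Definition vec_coef (v : vec R) (w : seq nat) : R := \sum_(a <- v) a.1 * tens_coef a.2 w.

Definition insert_at (w : seq nat) (k l : nat) := take k w ++ l :: drop k w.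

Definition acrC (a : nat -> R) (F : seq nat -> R) (w : seq nat) : R :=
  if w is i :: w' then a i * F w' else 0.
Definition annC (a : nat -> R) (F : seq nat -> R) (w : seq nat) : R :=
  \sum_(k < (size w).+1) q ^+ k * \sum_(l < N) a l * gap l * F (insert_at w k l).
Definition presC (a : nat -> R) (F : seq nat -> R) (w : seq nat) : R :=
  if w is i :: w' then \sum_(k < (size w').+1) q ^+ k * (a i * F (insert_at w' k i)) else 0.
Definition XC (a : nat -> R) (F : seq nat -> R) (w : seq nat) : R :=
  acrC a F w + annC a F w + presC a F w.

Fixpoint step_tens (fs : tens R) : Prop :=
  if fs is f :: fs' then is_step f /\ step_tens fs' else True.
Fixpoint step_vec (v : vec R) : Prop :=
  if v is a :: v' then step_tens a.2 /\ step_vec v' else True.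

Lemma step_tens_nth fs j : step_tens fs -> is_step (nth (@fn0 R) fs j).
Proof.
elim: fs j => [|f fs IHfs] [|j] /=; try by move=> _; exact: is_step0.
  by case.
by case=> _ /IHfs.
Qed.

Lemma step_tens_cat fs gs : step_tens fs -> step_tens gs -> step_tens (fs ++ gs).
Proof. by elim: fs => //= f fs IHfs [hf hfs] hgs; split => //; exact: IHfs. Qed.

Lemma step_tens_take k fs : step_tens fs -> step_tens (take k fs).
Proof. by elim: fs k => [|f fs IHfs] [|k] //= [hf hfs]; split => //; exact: IHfs. Qed.

Lemma step_tens_drop k fs : step_tens fs -> step_tens (drop k fs).
Proof. by elim: fs k => [|f fs IHfs] [|k] //= [hf hfs]; exact: IHfs. Qed.

Lemma step_tens_rem_at k fs : step_tens fs -> step_tens (rem_at k fs).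
Proof. by move=> hfs; apply: step_tens_cat; [exact: step_tens_take|exact: step_tens_drop]. Qed.

Lemma step_vec_cat v w : step_vec v -> step_vec w -> step_vec (v ++ w).
Proof. by elim: v => //= a v IHv [ha hv] hw; split => //; exact: IHv. Qed.

Lemma step_vec_scale c v : step_vec v -> step_vec (vscale c v).
Proof. by elim: v => //= a v IHv [ha hv]; split => //; exact: IHv. Qed.

Lemma step_vec_vmap op v : (forall fs, step_tens fs -> step_vec (op fs)) ->
  step_vec v -> step_vec (vmap op v).
Proof.
move=> hop; elim: v => //= a v IHv [ha hv].
by apply: step_vec_cat; [exact/step_vec_scale/hop|exact: IHv].
Qed.

Lemma step_vec_Xop b v : is_step (ind0 b) -> step_vec v -> step_vec (Xop q b v).
Proof.
move=> hb hv; apply: step_vec_cat; [|apply: step_vec_cat]; apply: step_vec_vmap => // fs hfs.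
- rewrite /ann; elim: (iota 0 (size fs)) => //= k ks IHks; split => //.
  exact: step_tens_rem_at.
- rewrite /pres; elim: (iota 0 (size fs)) => //= k ks IHks; split => //; split.
    by apply: is_step_mul => //; exact: step_tens_nth.
  exact: step_tens_rem_at.
Qed.

Lemma step_vec_Xinc a b v : is_step (ind0 a) -> is_step (ind0 b) -> step_vec v ->
  step_vec (Xinc q a b v).
Proof.
move=> ha hb hv; apply: step_vec_cat; first exact: step_vec_Xop.
by apply: step_vec_scale; exact: step_vec_Xop.
Qed.

Lemma vec_coef_nil : vec_coef [::] = fun _ => 0.
Proof. by apply/funext => w; rewrite /vec_coef big_nil. Qed.

Lemma vec_coef_cons a v : vec_coef (a :: v) = fun w => a.1 * tens_coef a.2 w + vec_coef v w.
Proof. by apply/funext => w; rewrite /vec_coef big_cons. Qed.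

Lemma vec_coef_cat v v' w : vec_coef (v ++ v') w = vec_coef v w + vec_coef v' w.
Proof. by rewrite /vec_coef big_cat. Qed.

Lemma vec_coef_scale c v w : vec_coef (vscale c v) w = c * vec_coef v w.
Proof. by rewrite /vec_coef big_map mulr_sumr; apply: eq_bigr => a _ /=; rewrite mulrA. Qed.

Lemma vec_coef_sub v v' w : vec_coef (vsub v v') w = vec_coef v w - vec_coef v' w.
Proof. by rewrite vec_coef_cat vec_coef_scale mulN1r. Qed.

Lemma vec_coef_vmap op v w : vec_coef (vmap op v) w = \sum_(a <- v) a.1 * vec_coef (op a.2) w.
Proof.
elim: v => [|a v IHv]; first by rewrite vec_coef_nil big_nil.
by rewrite /vmap /= vec_coef_cat vec_coef_scale -/(vmap op v) IHv big_cons.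
Qed.

Lemma vec_coef_vsum vs w : vec_coef (vsum vs) w = \sum_(v <- vs) vec_coef v w.
Proof.
elim: vs => [|v vs IHvs]; first by rewrite vec_coef_nil big_nil.
by rewrite /vsum /= vec_coef_cat -/(vsum vs) IHvs big_cons.
Qed.

Lemma tens_mono_nil w : tens_mono [::] w = 1.
Proof. by rewrite /tens_mono; case: w => [|i w] /=; rewrite big_nil. Qed.

Lemma tens_mono_cons f fs i w : tens_mono (f :: fs) (i :: w) = at_cell f i * tens_mono fs w.
Proof. by rewrite /tens_mono /= big_cons. Qed.

Lemma tens_coef_cons f fs i w :
  tens_coef (f :: fs) (i :: w) = at_cell f i * tens_coef fs w.
Proof. by rewrite /tens_coef /= eqSS tens_mono_cons mulrCA. Qed.

Lemma tens_mono_cat fs1 fs2 w1 w2 : size fs1 = size w1 ->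
  tens_mono (fs1 ++ fs2) (w1 ++ w2) = tens_mono fs1 w1 * tens_mono fs2 w2.
Proof. by move=> h; rewrite /tens_mono zip_cat // big_cat. Qed.

Lemma vec_coef_Omega w : vec_coef (Omega R) w = (size w == 0)%:R.
Proof.
by rewrite /vec_coef big_cons big_nil addr0 mul1r /tens_coef tens_mono_nil mulr1 eq_sym.
Qed.

Lemma size_insert_at w k l : size (insert_at w k l) = (size w).+1.
Proof. by rewrite /insert_at size_cat /= addnS -size_cat cat_take_drop. Qed.

Lemma size_rem_at (fs : tens R) k : (k < size fs)%N -> size (rem_at k fs) = (size fs).-1.
Proof. by move=> h; rewrite /rem_at size_cat size_take size_drop h; lia. Qed.

Lemma tens_mono_insert_at fs w k l : size fs = (size w).+1 -> (k <= size w)%N ->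
  tens_mono fs (insert_at w k l) = at_cell (nth (@fn0 R) fs k) l * tens_mono (rem_at k fs) w.
Proof.
move=> hs hk; have hk' : (k < size fs)%N by rewrite hs.
have st : size (take k fs) = size (take k w) by rewrite !size_takel ?hs ?leqW.
rewrite {1}(_ : fs = take k fs ++ nth (@fn0 R) fs k :: drop k.+1 fs); last first.
  by rewrite -drop_nth // cat_take_drop.
rewrite /insert_at tens_mono_cat // tens_mono_cons /rem_at.
by rewrite -{3}(cat_take_drop k w) tens_mono_cat //; ring.
Qed.

Lemma vec_coef_acr g fs w : vec_coef (acr g fs) w = acrC (at_cell g) (tens_coef fs) w.
Proof.
rewrite /vec_coef /acr big_cons big_nil addr0 mul1r.
by case: w => [|i w]; [rewrite /tens_coef mul0r | exact: tens_coef_cons].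
Qed.

Lemma tens_coef_rem_at fs w k : (k < size fs)%N ->
  tens_coef (rem_at k fs) w = (size fs == (size w).+1)%:R * tens_mono (rem_at k fs) w.
Proof.
move=> hk; rewrite /tens_coef size_rem_at //.
by case: (size fs) hk => //= n _; rewrite eqSS.
Qed.

Lemma vec_coef_ann g fs w : is_step g -> step_tens fs ->
  vec_coef (ann q g fs) w = annC (at_cell g) (tens_coef fs) w.
Proof.
move=> hg hfs; rewrite /vec_coef /ann big_map /annC /= big_iota0_ord.
have [hs|hs] := eqVneq (size fs) (size w).+1; last first.
  rewrite big1 => [|k _]; last by rewrite tens_coef_rem_at // (negbTE hs) mul0r mulr0.
  rewrite big1 // => k _; rewrite big1 ?mulr0 // => l _.
  by rewrite /tens_coef size_insert_at (negbTE hs) !mul0r mulr0.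
rewrite hs; apply: eq_bigr => k _; have hk : (k < size fs)%N by rewrite hs.
rewrite ip1_step //; last exact: step_tens_nth.
rewrite tens_coef_rem_at // hs eqxx mul1r -mulrA; congr (_ * _).
rewrite mulr_suml; apply: eq_bigr => l _.
have hkw : (k <= size w)%N by rewrite -ltnS.
by rewrite /tens_coef size_insert_at hs eqxx mul1r tens_mono_insert_at //; ring.
Qed.

Lemma vec_coef_pres g fs w : vec_coef (pres q g fs) w = presC (at_cell g) (tens_coef fs) w.
Proof.
rewrite /vec_coef /pres big_map /presC /=; case: w => [|i w].
  by rewrite big1 // => k _; rewrite /tens_coef /= mul0r mulr0.
rewrite big_iota0_ord.
have [hs|hs] := eqVneq (size fs) (size w).+1; last first.
  rewrite big1 => [|k _]; last first.
    by rewrite tens_coef_cons tens_coef_rem_at // (negbTE hs) mul0r !mulr0.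
  by rewrite big1 // => k _; rewrite /tens_coef size_insert_at (negbTE hs) !mul0r !mulr0.
rewrite hs; apply: eq_bigr => k _; have hk : (k < size fs)%N by rewrite hs.
have hkw : (k <= size w)%N by rewrite -ltnS.
rewrite tens_coef_cons tens_coef_rem_at // /tens_coef size_insert_at hs eqxx.
by rewrite tens_mono_insert_at // /at_cell /=; ring.
Qed.

Lemma XC_lin a c F G w :
  XC a (fun w => c * F w + G w) w = c * XC a F w + XC a G w.
Proof.
have annC_lin : annC a (fun w => c * F w + G w) w = c * annC a F w + annC a G w.
  rewrite /annC mulr_sumr -big_split; apply: eq_bigr => k _ /=.
  by rewrite !mulr_sumr -big_split /=; apply: eq_bigr => l _; ring.
rewrite /XC {}annC_lin /acrC /presC; case: w => [|i w] /=; first ring.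
rewrite [X in _ + X = _](_ : _ =
    c * \sum_(k < (size w).+1) q ^+ k * (a i * F (insert_at w k i)) +
    \sum_(k < (size w).+1) q ^+ k * (a i * G (insert_at w k i))); first ring.
by rewrite mulr_sumr -big_split /=; apply: eq_bigr => k _; ring.
Qed.

Lemma XC0 a w : XC a (fun _ => 0) w = 0.
Proof.
have annC0 : annC a (fun _ => 0) w = 0.
  by rewrite /annC big1 // => k _; rewrite big1 ?mulr0 // => l _; rewrite mulr0.
rewrite /XC {}annC0 /acrC /presC; case: w => [|i w]; rewrite ?addr0 //.
by rewrite mulr0 big1 ?addr0 // => k _; rewrite !mulr0.
Qed.

Lemma XC_vec_coef a v w : XC a (vec_coef v) w = \sum_(x <- v) x.1 * XC a (tens_coef x.2) w.
Proof.
elim: v => [|x v IHv]; first by rewrite vec_coef_nil XC0 big_nil.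
by rewrite vec_coef_cons XC_lin IHv big_cons.
Qed.

Lemma vec_coef_Xop b v w : is_step (ind0 b) -> step_vec v ->
  vec_coef (Xop q b v) w = XC (at_cell (ind0 b)) (vec_coef v) w.
Proof.
move=> hb hv; rewrite XC_vec_coef /Xop /vadd !vec_coef_cat !vec_coef_vmap -!big_split /=.
elim: v hv => [_|x v IHv [hx hv]]; first by rewrite !big_nil.
by rewrite !big_cons IHv // vec_coef_acr vec_coef_ann // vec_coef_pres /XC; ring.
Qed.

Lemma XC_subl a1 a2 F w : XC a1 F w - XC a2 F w = XC (fun l => a1 l - a2 l) F w.
Proof.
have annC_sub : annC a1 F w - annC a2 F w = annC (fun l => a1 l - a2 l) F w.
  rewrite /annC -sumrB; apply: eq_bigr => k _.
  by rewrite -mulrBr -sumrB; congr (_ * _); apply: eq_bigr => l _; ring.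
rewrite /XC -{}annC_sub /acrC /presC; case: w => [|i w]; first ring.
have presC_sub : \sum_(k < (size w).+1) q ^+ k * (a1 i * F (insert_at w k i)) -
    \sum_(k < (size w).+1) q ^+ k * (a2 i * F (insert_at w k i)) =
    \sum_(k < (size w).+1) q ^+ k * ((a1 i - a2 i) * F (insert_at w k i)).
  by rewrite -sumrB; apply: eq_bigr => k _; ring.
by rewrite -presC_sub; ring.
Qed.

Definition in_grid (w : seq nat) := all (fun i => (i < N)%N) w.

Lemma in_grid_insert_at w k l : in_grid w -> (l < N)%N -> in_grid (insert_at w k l).
Proof.
rewrite /in_grid -{1}(cat_take_drop k w) all_cat => /andP[h1 h2] hl.
by rewrite /insert_at all_cat /= h1 h2 hl.
Qed.

Lemma eq_XC a1 a2 F G w : (forall l, (l < N)%N -> a1 l = a2 l) ->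
  (forall w, in_grid w -> F w = G w) -> in_grid w -> XC a1 F w = XC a2 G w.
Proof.
move=> ha hF hw; rewrite /XC /acrC /annC /presC; congr (_ + _ + _).
- by case: w hw => [|i w] //= /andP[hi hw]; rewrite ha // hF.
- apply: eq_bigr => k _; congr (_ * _); apply: eq_bigr => l _.
  by rewrite ha // hF //; exact: in_grid_insert_at.
- case: w hw => [|i w] //= /andP[hi hw]; apply: eq_bigr => k _.
  by rewrite ha // hF //; exact: in_grid_insert_at.
Qed.

Lemma vec_coef_Xinc a b v w : is_step (ind0 a) -> is_step (ind0 b) -> step_vec v ->
  vec_coef (Xinc q a b v) w = XC (fun l => at_cell (ind0 b) l - at_cell (ind0 a) l) (vec_coef v) w.
Proof. by move=> ha hb hv; rewrite vec_coef_sub !vec_coef_Xop // XC_subl. Qed.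

(* As i \notin w0, the annihilation and preservation terms, which keep the letter i, vanish. *)
Lemma XC_delta i w0 w : i \notin w0 ->
  XC (fun l => (l == i)%:R) (fun w => (w == w0)%:R) w = (w == i :: w0)%:R.
Proof.
move=> i_w0; have insert_neq w' k : insert_at w' k i != w0.
  by apply: contraNneq i_w0 => <-; rewrite /insert_at mem_cat in_cons eqxx orbT.
rewrite /XC /acrC /annC /presC big1 ?addr0 => [|k _]; last first.
  rewrite big1 ?mulr0 // => l _; have [->|] := eqVneq (nat_of_ord l) i.
    by rewrite (negbTE (insert_neq _ _)) mulr0.
  by rewrite !mul0r.
case: w => [|j w] /=; first by rewrite addr0.
rewrite big1 ?addr0 => [|k _]; last first.
  have [->|] := eqVneq j i; first by rewrite (negbTE (insert_neq _ _)) !mulr0.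
  by rewrite mul0r mulr0.
by rewrite eqseq_cons -natrM mulnb.
Qed.

Lemma XC_ones m w :
  XC (fun _ => 1) (fun w => (size w == m)%:R) w =
  (size w == m.+1)%:R + ((size w).+1 == m)%:R * (qint q m * t) + (size w == m)%:R * qint q m.
Proof.
rewrite /XC /acrC /annC /presC; congr (_ + _ + _).
- by case: w => [|j w]; rewrite ?mul1r.
- have [<-|ne] := eqVneq (size w).+1 m; last first.
    rewrite mul0r big1 // => k _; rewrite big1 ?mulr0 // => l _.
    by rewrite size_insert_at (negbTE ne) mulr0.
  rewrite mul1r /qint mulr_suml; apply: eq_bigr => k _; congr (_ * _).
  by rewrite -sum_gap; apply: eq_bigr => l _; rewrite size_insert_at eqxx mul1r mulr1.
- case: w => [|j w] /=; first by case: m => [|m]; rewrite /qint ?big_ord0 ?mulr0 ?mul0r.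
  have [<-|ne] := eqVneq (size w).+1 m; last first.
    by rewrite mul0r big1 // => k _; rewrite size_insert_at (negbTE ne) !mulr0.
  by rewrite mul1r /qint; apply: eq_bigr => k _; rewrite size_insert_at eqxx !mul1r mulr1.
Qed.

Lemma step_Cpair m : step_vec (Cpair q t m).1 /\ step_vec (Cpair q t m).2.
Proof.
elim: m => [|m]; first by [].
rewrite [Cpair q t m.+1]/=; case: (Cpair q t m) => c cp /= [hc hcp]; split => //.
apply: step_vec_cat; first exact: step_vec_Xop is_step_ind0_t hc.
by apply: step_vec_cat; exact: step_vec_scale.
Qed.

(* In grid coefficients C_{q,m}(X(t),t) Omega is the all-ones function on words of length m:
   the recursion for C_{q,m} cancels the annihilation and preservation terms of X(t). *)
Lemma Cpair_coef m w : in_grid w ->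
  vec_coef (Cpair q t m).1 w = (size w == m)%:R /\
  vec_coef (Cpair q t m).2 w = (if m is m'.+1 then (size w == m')%:R else 0).
Proof.
elim: m w => [|m IHm] w hw; first by rewrite vec_coef_Omega vec_coef_nil.
have [hc _] := step_Cpair m.
rewrite [Cpair q t m.+1]/=; move: hc IHm; case: (Cpair q t m) => c cp /= hc IHm.
split; last by case: (IHm w hw).
rewrite /vadd vec_coef_cat (vec_coef_Xop _ is_step_ind0_t hc) vec_coef_cat !vec_coef_scale.
rewrite (@eq_XC _ (fun _ => 1) _ (fun w => (size w == m)%:R)) //; first last.
- by move=> w' hw'; case: (IHm w' hw').
- by move=> l hl; rewrite -subdiv_last at_cell_ind0 // hl.
have [-> ->] := IHm w hw; rewrite XC_ones.
by case: m {IHm hc} => [|m] /=; rewrite ?eqSS; ring.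
Qed.

Lemma at_cell_incr i l : (i < N)%N -> (l < N)%N ->
  at_cell (ind0 (pt i.+1)) l - at_cell (ind0 (pt i)) l = (l == i)%:R.
Proof.
move=> hi hl; rewrite !at_cell_ind0 // ?(ltnW hi) // ltnS leq_eqVlt.
by have [->|ne] := eqVneq l i; rewrite /= ?ltnn ?subr0 ?subrr.
Qed.

Definition incr_chain m (u : {ffun 'I_m -> 'I_N}) (js : seq 'I_m) : vec R :=
  foldr (fun j v => Xinc q (pt (u j)) (pt (u j).+1) v) (Omega R) js.

Lemma step_incr_chain m (u : {ffun 'I_m -> 'I_N}) js : step_vec (incr_chain u js).
Proof.
elim: js => [|j js IHjs] //=; have hj := ltn_ord (u j).
exact: step_vec_Xinc (is_step_ind0 (ltnW hj)) (is_step_ind0 hj) IHjs.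
Qed.

Lemma incr_chain_coef m (u : {ffun 'I_m -> 'I_N}) js w :
  uniq [seq nat_of_ord (u j) | j <- js] -> in_grid w ->
  vec_coef (incr_chain u js) w = (w == [seq nat_of_ord (u j) | j <- js])%:R.
Proof.
elim: js w => [|j js IHjs] w; first by rewrite vec_coef_Omega size_eq0.
move=> /= /andP[uj_fresh u_uniq] hw; have hj := ltn_ord (u j).
rewrite (vec_coef_Xinc _ (is_step_ind0 (ltnW hj)) (is_step_ind0 hj) (step_incr_chain _ _)).
rewrite (@eq_XC _ (fun l => (l == u j)%:R) _
    (fun w => (w == [seq nat_of_ord (u j) | j <- js])%:R)) //.
- exact: XC_delta.
- by move=> l hl; rewrite at_cell_incr.
- by move=> w'; exact: IHjs.
Qed.

Lemma psi_vec_coef m w : in_grid w ->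
  vec_coef (psi_vec q m s) w =
    \sum_(u <- enum [pred u : {ffun 'I_m -> 'I_N} | injectiveb u]) (w == word u)%:R.
Proof.
move=> hw; rewrite /psi_vec vec_coef_vsum big_map; apply: eq_big_seq => u.
rewrite mem_enum inE => /injectiveP u_inj; apply: (incr_chain_coef (u := u)) => //.
by rewrite map_inj_uniq ?enum_uniq // => j j' /val_inj /u_inj.
Qed.

Lemma step_psi_vec m : step_vec (psi_vec q m s).
Proof.
rewrite /psi_vec; elim: (enum [pred u : {ffun 'I_m -> 'I_N} | injectiveb u]) => //= u us.
exact: step_vec_cat (step_incr_chain u _).
Qed.

(** * The q-inner product on grid coefficients *)

Lemma in_grid_word k (w : {ffun 'I_k -> 'I_N}) : in_grid (word w).
Proof. by rewrite /in_grid all_map; apply/allP => j _ /=. Qed.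

Lemma tens_mono_nth n fs ws : size fs = n -> size ws = n ->
  tens_mono fs ws = \prod_(j < n) at_cell (nth (@fn0 R) fs j) (nth 0%N ws j).
Proof.
elim: fs ws n => [|f fs IHfs] [|i ws] [|n] //= h1 h2; first by rewrite tens_mono_nil big_ord0.
rewrite tens_mono_cons big_ord_recl /=; congr (_ * _).
by rewrite (IHfs ws n); case: h1; case: h2.
Qed.

Lemma tens_coef_word fs k (w : {ffun 'I_k -> 'I_N}) :
  tens_coef fs (word w) = (size fs == k)%:R * \prod_(j < k) at_cell (nth (@fn0 R) fs j) (w j).
Proof.
rewrite /tens_coef size_word; have [e|] := eqVneq (size fs) k; last by rewrite !mul0r.
by rewrite (@tens_mono_nth k) ?size_word //; under eq_bigr do rewrite nth_word.
Qed.

Definition qform k (F G : seq nat -> R) : R :=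
  \sum_(sg : 'S_k) q ^+ inversions sg *
    \sum_(w : {ffun 'I_k -> 'I_N})
      F (word w) * G (word [ffun j => w (sg^-1 j)%g]) * \prod_(j < k) gap (w j).

Lemma qform_tens_coef k fs gs : step_tens fs -> step_tens gs ->
  qform k (tens_coef fs) (tens_coef gs) = ((size fs == k) && (size gs == k))%:R * tensip q fs gs.
Proof.
move=> hfs hgs; have [/andP[/eqP e1 /eqP e2]|ne] := boolP ((size fs == k) && (size gs == k));
  last first.
  rewrite mul0r /qform big1 // => sg _; rewrite big1 ?mulr0 // => w _.
  by rewrite !tens_coef_word; case/nandP: ne => /negbTE->; rewrite /= !mul0r ?mulr0 ?mul0r.
rewrite mul1r /tensip e1 e2 eqxx /qform; apply: eq_bigr => sg _; congr (_ * _).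
rewrite (eq_bigr (fun j : 'I_k => \sum_(l < N) at_cell (nth (@fn0 R) fs j) l *
    at_cell (nth (@fn0 R) gs (sg j)) l * gap l)); last first.
  by move=> j _; rewrite ip1_step //; exact: step_tens_nth.
rewrite bigA_distr_bigA /=; apply: eq_bigr => w _.
rewrite !tens_coef_word e1 e2 eqxx !mul1r !big_split /=; congr (_ * _ * _).
rewrite [LHS](reindex_inj (@perm_inj _ sg)); apply: eq_bigr => j _.
by rewrite ffunE permK.
Qed.

Lemma sum_qform_tens_coef K fs gs : step_tens fs -> step_tens gs -> (size fs < K)%N ->
  \sum_(k < K) qform k (tens_coef fs) (tens_coef gs) = tensip q fs gs.
Proof.
move=> hfs hgs hK; under eq_bigr do rewrite qform_tens_coef //.
rewrite (bigD1 (Ordinal hK)) //= big1 ?addr0 => [|k /eqP ne]; last first.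
  have [e|] := eqVneq (size fs) k; last by rewrite mul0r.
  by case: ne; apply: val_inj; rewrite /= e.
rewrite eqxx /=; have [_|ne] := eqVneq (size gs) (size fs); first by rewrite mul1r.
by rewrite mul0r /tensip eq_sym (negbTE ne).
Qed.

Lemma qform_linl k c F1 F2 G :
  qform k (fun w => c * F1 w + F2 w) G = c * qform k F1 G + qform k F2 G.
Proof.
rewrite /qform mulr_sumr -big_split; apply: eq_bigr => sg _ /=.
by rewrite !mulr_sumr -big_split; apply: eq_bigr => w _ /=; ring.
Qed.

Lemma qform_linr k c F G1 G2 :
  qform k F (fun w => c * G1 w + G2 w) = c * qform k F G1 + qform k F G2.
Proof.
rewrite /qform mulr_sumr -big_split; apply: eq_bigr => sg _ /=.
by rewrite !mulr_sumr -big_split; apply: eq_bigr => w _ /=; ring.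
Qed.

Lemma qform_vec_coefl k v G :
  qform k (vec_coef v) G = \sum_(x <- v) x.1 * qform k (tens_coef x.2) G.
Proof.
elim: v => [|x v IHv]; last by rewrite vec_coef_cons qform_linl IHv big_cons.
rewrite vec_coef_nil big_nil /qform big1 // => sg _.
by rewrite big1 ?mulr0 // => w _; rewrite !mul0r.
Qed.

Lemma qform_vec_coefr k F v :
  qform k F (vec_coef v) = \sum_(x <- v) x.1 * qform k F (tens_coef x.2).
Proof.
elim: v => [|x v IHv]; last by rewrite vec_coef_cons qform_linr IHv big_cons.
rewrite vec_coef_nil big_nil /qform big1 // => sg _.
by rewrite big1 ?mulr0 // => w _; rewrite mulr0 mul0r.
Qed.

Definition max_rank (v : vec R) : nat := \max_(a <- v) size a.2.

Lemma max_rank_ltn v K : (max_rank v < K)%N -> all (fun a : R * tens R => (size a.2 < K)%N) v.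
Proof.
by elim: v => //= a v IHv; rewrite /max_rank big_cons gtn_max => /andP[-> /IHv].
Qed.

Lemma vip_qform K v v' : step_vec v -> step_vec v' ->
  (max_rank v < K)%N -> (max_rank v' < K)%N ->
  vip q v v' = \sum_(k < K) qform k (vec_coef v) (vec_coef v').
Proof.
move=> hv hv' /max_rank_ltn Kv /max_rank_ltn Kv'.
under eq_bigr do rewrite qform_vec_coefl.
rewrite exchange_big /= /vip.
elim: v hv Kv => [|x v IHv] /=; first by rewrite !big_nil.
move=> [hx hv] /andP[Kx Kv]; rewrite !big_cons IHv //; congr (_ + _).
rewrite -mulr_sumr; under [in RHS]eq_bigr do rewrite qform_vec_coefr.
rewrite exchange_big /= mulr_sumr.
elim: v' hv' Kv' {IHv} => [|y v' IHv'] /=; first by rewrite !big_nil.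
move=> [hy hv'] /andP[Ky Kv']; rewrite !big_cons IHv' //; congr (_ + _).
by rewrite -mulr_sumr sum_qform_tens_coef // mulrA.
Qed.

Section PsiMinusC.
Variable m : nat.
Local Notation V := (vsub (psi_vec q m s) (C_vec q t m)).

Lemma step_psi_sub_C : step_vec V.
Proof.
by apply: step_vec_cat; [exact: step_psi_vec|apply/step_vec_scale; case: (step_Cpair m)].
Qed.

Let psi_sub_C_word_coef k (w : {ffun 'I_k -> 'I_N}) : vec_coef V (word w) =
  \sum_(u <- enum [pred u : {ffun 'I_m -> 'I_N} | injectiveb u]) (word w == word u)%:R
    - (k == m)%:R.
Proof.
rewrite vec_coef_sub psi_vec_coef ?in_grid_word //.
by have [-> _] := Cpair_coef m (in_grid_word w); rewrite size_word.
Qed.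

Lemma psi_sub_C_coef_neq k (w : {ffun 'I_k -> 'I_N}) : k != m -> vec_coef V (word w) = 0.
Proof.
move=> ne; rewrite psi_sub_C_word_coef (negbTE ne) subr0 big1 // => u _.
have [eq_w|//] := eqVneq (word w) (word u).
by move: ne; rewrite -(size_word w) eq_w size_word eqxx.
Qed.

Lemma psi_sub_C_coef (w : {ffun 'I_m -> 'I_N}) : vec_coef V (word w) = (injectiveb w)%:R - 1.
Proof.
rewrite psi_sub_C_word_coef eqxx big_enum /=; congr (_ - _).
have word_eqE u : (word w == word u) = (w == u) by apply/eqP/eqP => [/word_inj|->].
under eq_bigr do rewrite word_eqE.
case: (boolP (injectiveb w)) => w_inj /=.
  by rewrite (bigD1 w) ?inE //= eqxx big1 ?addr0 // => u /andP[_ ne]; rewrite eq_sym (negbTE ne).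
by rewrite big1 // => u; rewrite inE => u_inj; case: eqP => // eq_w; rewrite eq_w u_inj in w_inj.
Qed.

(* Only words of length m survive, and on them the coefficient of V is the indicator of
   non-injectivity, which is invariant under permutations of the letters. *)
Lemma vip_psi_sub_C : vip q V V =
  (\sum_(sg : 'S_m) q ^+ inversions sg) *
  \sum_(w : {ffun 'I_m -> 'I_N}) (~~ injectiveb w)%:R * \prod_(j < m) gap (w j).
Proof.
have mK : (m < (maxn (max_rank V) m).+1)%N by rewrite ltnS leq_maxr.
rewrite (@vip_qform (maxn (max_rank V) m).+1 _ _ step_psi_sub_C step_psi_sub_C)
  ?ltnS ?leq_maxl //.
rewrite (bigD1 (Ordinal mK)) //= big1 ?addr0 => [|k /eqP ne]; last first.
  rewrite /qform big1 // => sg _; rewrite big1 ?mulr0 // => w _.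
  by rewrite psi_sub_C_coef_neq ?mul0r //; apply/eqP => eq_km; apply: ne; exact: val_inj.
rewrite /qform mulr_suml; apply: eq_bigr => sg _; congr (_ * _).
apply: eq_bigr => w _; rewrite !psi_sub_C_coef injectiveb_perm; congr (_ * _).
by case: (injectiveb w); rewrite /= ?subrr ?mul0r // sub0r mulrNN mul1r.
Qed.

Lemma vip_psi_sub_C_le : `|q| <= 1 ->
  vip q V V <= #|'S_m|%:R * (m%:R * (m%:R * (t * (mesh s * (1 + t) ^+ m)))).
Proof.
move=> hq; rewrite vip_psi_sub_C; apply: (le_trans (ler_norm _)); rewrite normrM.
have := sum_ffun_noninjective_le (fun l : 'I_N => gap_ge0 (ltn_ord l))
  (fun l : 'I_N => gap_le_mesh (ltn_ord l)) mesh_ge0 m; rewrite sum_gap => mass_le.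
apply: ler_pM; [exact: normr_ge0|exact: normr_ge0|exact: norm_sum_qinversions_le|].
rewrite ger0_norm //; apply: sumr_ge0 => w _.
by rewrite mulr_ge0 //; apply: prodr_ge0 => j _; exact: gap_ge0.
Qed.

End PsiMinusC.

End Subdivision.

Theorem proposition5p5 (R : realType) (q : R) :
  -1 < q < 1 ->
  forall (m : nat) (t : R), 0 < t ->
  forall eps : R, 0 < eps ->
  exists2 delta : R, 0 < delta &
    forall s : seq R, is_subdiv t s -> mesh s < delta ->
      vnorm q (vsub (psi_vec q m s) (C_vec q t m)) < eps.
Proof.
move=> /andP[q_gtN1 q_lt1] m t t_gt0 eps eps_gt0.
have hq : `|q| <= 1 by rewrite ler_norml; apply/andP; split; lra.
pose C : R := #|'S_m|%:R * (m%:R * (m%:R * (t * (1 + t) ^+ m))).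
have C_ge0 : 0 <= C by rewrite !mulr_ge0 ?exprn_ge0 //; lra.
have eps2_gt0 : 0 < eps ^+ 2 by exact: exprn_gt0.
exists (eps ^+ 2 / (C + 1)) => [|s s_subdiv mesh_lt]; first by rewrite divr_gt0 //; lra.
have vip_le : vip q (vsub (psi_vec q m s) (C_vec q t m)) (vsub (psi_vec q m s) (C_vec q t m))
    <= C * mesh s.
  have -> : C * mesh s = #|'S_m|%:R * (m%:R * (m%:R * (t * (mesh s * (1 + t) ^+ m)))).
    by rewrite /C; ring.
  exact: vip_psi_sub_C_le.
have C_mesh_lt : C * mesh s < eps ^+ 2.
  have := mesh_ge0 s_subdiv; rewrite ltr_pdivlMr ?ltr_wpDl // in mesh_lt; nra.
rewrite /vnorm -(ger0_norm (ltW eps_gt0)) -sqrtr_sqr ltr_sqrt //.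
exact: le_lt_trans vip_le C_mesh_lt.
Qed.
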